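(* For every $k \in \mathbb{N}$, there exists a digraph $G_k$ with $\kappa'(G_k) \ge k$ such that $G_k$ contains no subdivision of $\overleftrightarrow{K}_4$.
   Context: Digraphs are finite, loopless, have no parallel arcs, but may contain digons. $\kappa'(D)$ is the strong arc-connectivity: $D$ is strongly $k$-arc-connected if $D-E$ is strongly connected for every set $E$ of at most $k-1$ arcs, and $\kappa'(D)$ is the largest such $k$. $\overleftrightarrow{K}_4$ is the bioriented complete graph on four vertices (both arcs $(u,v),(v,u)$ for every pair of distinct vertices). A subdivision of a digraph $F$ is obtained by replacing each arc $(x,y)$ by a directed $x$-$y$-path, with paths for different arcs internally vertex-disjoint. *)

From mathcomp Require Import all_boot.
Set Implicit Arguments. Unset Strict Implicit. Unset Printing Implicit Defensive.

(* A digraph on a finite vertex type V is given by its arc relation A : rel V.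
   No parallel arcs is automatic (A is a relation); looplessness is a hypothesis
   [loopless A]; digons are allowed. *)
Definition loopless (V : finType) (A : rel V) : Prop := forall v, ~~ A v v.

Definition arcs (V : finType) (A : rel V) : {set V * V} :=
  [set e | A e.1 e.2].

Definition del_arcs (V : finType) (A : rel V) (E : {set V * V}) : rel V :=
  fun u v => A u v && ((u, v) \notin E).

Definition strongly_connected (V : finType) (A : rel V) : Prop :=
  forall x y : V, connect A x y.

(* D is strongly k-arc-connected: D - E is strongly connected for every set E
   of at most k-1 arcs (i.e. fewer than k arcs).  kappa'(D) >= k iff this holds. *)
Definition strongly_k_arc_connected (V : finType) (A : rel V) (k : nat) : Prop :=
  forall E : {set V * V}, E \subset arcs A -> #|E| < k ->
    strongly_connected (del_arcs A E).

(* D contains a subdivision of the bioriented K4: four distinct branch vertices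
   b 0..b 3 and, for each ordered pair (i,j) with i <> j, a directed
   b i - b j path in D whose list of internal vertices is P i j; internal
   vertices are distinct, avoid all branch vertices, and the internal vertex
   sets of different paths are disjoint. *)
Definition has_subdiv_biK4 (V : finType) (A : rel V) : Prop :=
  exists (b : 'I_4 -> V) (P : 'I_4 -> 'I_4 -> seq V),
    injective b /\
    (forall i j : 'I_4, i != j ->
       [/\ path A (b i) (rcons (P i j) (b j)),
           uniq (P i j) &
           forall v, v \in P i j -> forall l, v != b l]) /\
    (forall i j i' j' : 'I_4, i != j -> i' != j' -> (i, j) != (i', j') ->
       forall v, v \in P i j -> v \notin P i' j').

From mathcomp Require Import all_boot zify.
Set Implicit Arguments. Unset Strict Implicit. Unset Printing Implicit Defensive.

(* The digraph is a blow-up of a tree-like digraph T on the words of length at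
   most n over an n-letter alphabet: every word points to its n children and
   every leaf points back to all its ancestors, so T is strongly connected with
   all out-degrees at least n.  Each node v of T is replaced by v itself
   together with a copy of T with all arcs reversed; v points to every vertex
   of its copy, and every vertex of the copy points to the out-neighbours of v
   in T.  Every nonempty proper vertex set then has at least n leaving arcs.

   In a subdivision of the bioriented K4 a branch vertex b_m is joined to the
   three others by six paths with disjoint interiors, so no two vertices other
   than b_m meet all three pairs of links at b_m.  If all branch vertices are
   nodes of T, take b_m deepest in T: a path entering the subtree below b_m
   arrives from the copy attached to the parent of b_m, hence passes through
   that parent, which therefore meets all three links.  Otherwise take b_m
   deepest in the reversed copy attached to some node v: a link from a branch
   vertex outside that copy enters it through v, and a link from b_m to a
   branch vertex inside it leaves the part below b_m either through the parent
   of b_m in the copy or by leaving the copy, to which it returns through v. *)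

Lemma path_first_entry (T : eqType) (e : rel T) (Q : pred T) x p :
  path e x p -> ~~ Q x -> Q (last x p) ->
  exists p1 w p2,
    [/\ p = p1 ++ w :: p2, ~~ Q (last x p1), Q w & e (last x p1) w].
Proof.
elim: p x => [|y p IH] x /=; first by move=> _ /negbTE ->.
case/andP=> exy yp nQx Qlast.
have [Qy|nQy] := boolP (Q y); first by exists [::], y, p.
have [p1 [w [p2 [-> nQu Qw euw]]]] := IH y yp nQy Qlast.
by exists (y :: p1), w, p2.
Qed.

Lemma connect_exit (T : finType) (e : rel T) (Q : pred T) x y :
  connect e x y -> Q x -> ~~ Q y -> exists u w, [/\ e u w, Q u & ~~ Q w].
Proof.
case/connectP=> p xp -> Qx nQy.
have nQx : ~~ predC Q x by rewrite /= Qx.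
have [p1 [w [p2 [_ nQu nQw uw]]]] := path_first_entry xp nQx nQy.
by exists (last x p1), w; rewrite negbK in nQu.
Qed.

Lemma injective_leq_card (T T' : finType) (f : T -> T') (S : {set T}) (L : {set T'}) :
  injective f -> (forall x, x \in S -> f x \in L) -> #|S| <= #|L|.
Proof.
move=> f_inj fSL; rewrite -(card_imset S f_inj); apply: subset_leq_card.
by apply/subsetP => _ /imsetP[x xS ->]; apply: fSL.
Qed.

Lemma val_insub_bseq (T : Type) n (s : seq T) :
  size s <= n -> insub_bseq n s = s :> seq T.
Proof. by move=> le_s_n; rewrite /insub_bseq insubdK. Qed.

Lemma suffix_maximal (I : finType) (T : eqType) (D : pred I) (f : I -> seq T) i0 :
  D i0 -> exists2 m, D m & forall j, D j -> suffix (f m) (f j) -> f j = f m.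
Proof.
move=> Di0; have [m Dm maxm] := arg_maxnP (size \o f) Di0.
exists m => // j Dj; rewrite suffixE => /eqP <-.
have /eqP-> : size (f j) - size (f m) == 0 by rewrite subn_eq0; apply: maxm.
by rewrite drop0.
Qed.

Definition leaving (V : finType) (A : rel V) (X : {set V}) : {set V * V} :=
  [set e | [&& A e.1 e.2, e.1 \in X & e.2 \notin X]].

Lemma cut_strongly_k_arc_connected (V : finType) (A : rel V) k :
  (forall (X : {set V}) x y, x \in X -> y \notin X -> k <= #|leaving A X|) ->
  strongly_k_arc_connected A k.
Proof.
move=> cut E _ small_E x y; apply/negPn/negP => not_xy.
pose X := [set z | connect (del_arcs A E) x z].
have leaving_sub : leaving A X \subset E.
  apply/subsetP => -[u w]; rewrite inE /= => /and3P[uw uX wX].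
  apply: contraNT wX => uwE; rewrite inE in uX; rewrite inE.
  by apply: connect_trans uX (connect1 _); rewrite /del_arcs uw.
have := leq_trans (cut X x y _ _) (subset_leq_card leaving_sub).
by rewrite !inE connect0 leqNgt small_E => /(_ isT not_xy).
Qed.

Section Tree.
Variable n : nat.

Definition tree_vertex := n.-bseq 'I_n.

(* A word s is the node reached from the root [::] by reading s from right to
   left, so its children are the i :: s and its ancestors its proper suffixes;
   a leaf (a word of length n) has an arc back to each of its ancestors. *)
Definition tree_arc (s t : tree_vertex) : bool :=
  ((size t == (size s).+1) && (behead t == s :> seq 'I_n))
  || [&& size s == n, t != s & suffix t s].

Definition tree_parent (s : tree_vertex) : tree_vertex := insub_bseq n (behead s).

Lemma tree_parentE s : tree_parent s = behead s :> seq 'I_n.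
Proof.
by rewrite val_insub_bseq // size_behead (leq_trans (leq_pred _) (size_bseq s)).
Qed.

Lemma tree_arc_irr s : ~~ tree_arc s s.
Proof. by rewrite /tree_arc eqxx andbF orbF; case: eqP => //; lia. Qed.

Lemma tree_arc_enter_subtree (r : seq 'I_n) s t :
  tree_arc s t -> suffix r t -> ~~ suffix r s ->
  t = r :> seq 'I_n /\ s = behead r :> seq 'I_n.
Proof.
case/orP => [/andP[_ /eqP <-]|/and3P[_ _ ts] rt]; last by rewrite (suffix_trans rt ts).
case/suffixP => -[|x q] /= ->; first by [].
by rewrite suffix_suffix.
Qed.

Definition tree_root : tree_vertex := [bseq].

Lemma tree_root_connect s : connect tree_arc tree_root s.
Proof.
move: {2}(size s) (erefl (size s)) => k; elim: k s => [|k IH] s size_s.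
  by rewrite (_ : s = tree_root) ?connect0 //; apply: val_inj; apply/nilP/eqP.
apply: connect_trans (IH (tree_parent s) _) (connect1 _).
  by rewrite tree_parentE size_behead size_s.
by rewrite /tree_arc tree_parentE size_behead size_s !eqxx.
Qed.

Hypothesis n_gt0 : 0 < n.

Lemma tree_connect_root s : connect tree_arc s tree_root.
Proof.
move: {2}(n - size s) (erefl (n - size s)) => k; elim: k s => [|k IH] s gap.
  have size_s : size s = n by move: (size_bseq s); lia.
  apply: connect1; rewrite /tree_arc /= size_s eqxx suffix0s andbT.
  by apply/eqP => /(congr1 val)/(congr1 size); rewrite size_s /=; lia.
have lt_s_n : size s < n by lia.
pose child : tree_vertex := insub_bseq n (Ordinal n_gt0 :: s).
have childE : child = Ordinal n_gt0 :: s :> seq _ by rewrite val_insub_bseq.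
apply: connect_trans (connect1 (_ : tree_arc s child)) (IH child _).
  by rewrite /tree_arc childE /= !eqxx.
by rewrite childE /= subnS gap.
Qed.

Lemma tree_connect s t : connect tree_arc s t.
Proof. exact: connect_trans (tree_connect_root s) (tree_root_connect t). Qed.

Lemma tree_outdeg s : n <= #|[set t | tree_arc s t]|.
Proof.
rewrite -{1}(card_ord n) -cardsT.
have [lt_s_n|le_n_s] := ltnP (size s) n.
  pose child (i : 'I_n) : tree_vertex := insub_bseq n (i :: s).
  have childE i : child i = i :: s :> seq _ by rewrite val_insub_bseq.
  apply: (@injective_leq_card _ _ child) => [i j /(congr1 val)|i _].
    by rewrite /= !childE => -[].
  by rewrite inE /tree_arc childE /= !eqxx.
have size_s : size s = n by apply/eqP; rewrite eqn_leq size_bseq le_n_s.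
pose ancestor (i : 'I_n) : tree_vertex := insub_bseq n (drop i.+1 s).
have ancestorE i : ancestor i = drop i.+1 s :> seq _.
  by rewrite val_insub_bseq // size_drop; lia.
have size_ancestor i : size (ancestor i) = n - i.+1.
  by rewrite ancestorE size_drop size_s.
apply: (@injective_leq_card _ _ ancestor) => [i j /(congr1 val)/(congr1 size)|i _].
  rewrite !size_ancestor => eq_ij; apply: val_inj.
  by move: (ltn_ord i) (ltn_ord j) eq_ij => /=; lia.
rewrite inE /tree_arc size_s eqxx /=; apply/orP; right.
rewrite ancestorE suffix_drop andbT.
by apply/eqP => /(congr1 val)/(congr1 size); rewrite size_ancestor size_s; lia.
Qed.

End Tree.

Section Blowup.
Variable n : nat.
Local Notation node := (tree_vertex n).

(* (v, None) stands for the node v itself and (v, Some c) for the vertex c of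
   a copy of the tree attached to v, with the arcs of that copy reversed. *)
Definition blowup_vertex := (node * option node)%type.

Definition blowup_arc (x y : blowup_vertex) : bool :=
  match x.2, y.2 with
  | None, Some _ => x.1 == y.1
  | Some _, None => tree_arc x.1 y.1
  | Some c, Some c' => (x.1 == y.1) && tree_arc c' c
  | None, None => false
  end.

Lemma blowup_arc_irr x : ~~ blowup_arc x x.
Proof. by case: x => v [c|]; rewrite /blowup_arc //= eqxx tree_arc_irr. Qed.

Hypothesis n_gt0 : 0 < n.
Local Notation leaving := (leaving blowup_arc).

Lemma leaving_dead_copy (X : {set blowup_vertex}) v c :
  (v, Some c) \in X -> (forall w, tree_arc v w -> (w, None) \notin X) ->
  n <= #|leaving X|.
Proof.
move=> vcX dead; apply: leq_trans (tree_outdeg n_gt0 v) _.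
apply: (@injective_leq_card _ _ (fun w => ((v, Some c), (w, None)))) => [w1 w2 [] //|w].
by rewrite !inE /blowup_arc /= vcX => vw; rewrite vw dead.
Qed.

Lemma leaving_main_copy (X : {set blowup_vertex}) v c0 :
  (v, None) \in X -> (v, Some c0) \notin X -> n <= #|leaving X|.
Proof.
move=> vX vc0X; apply: leq_trans (tree_outdeg n_gt0 c0) _.
pose g c := if (v, Some c) \in X then ((v, Some c), (v, Some c0))
            else ((v, None), (v, Some c)).
apply: (@injective_leq_card _ _ g) => [c1 c2|c].
  by rewrite /g; case: ((v, Some c1) \in X); case: ((v, Some c2) \in X) => // -[].
rewrite !inE /g => c0c.
by case: ifP => vcX; rewrite /blowup_arc /= eqxx ?c0c ?vcX ?vc0X ?vX.
Qed.

Lemma leaving_all_copies (X : {set blowup_vertex}) u w :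
  tree_arc u w -> (forall c, (u, Some c) \in X) -> (w, None) \notin X ->
  n <= #|leaving X|.
Proof.
move=> uw uX wX; apply: leq_trans (tree_outdeg n_gt0 (tree_root n)) _.
apply: (@injective_leq_card _ _ (fun c => ((u, Some c), (w, None)))).
  by move=> c1 c2 [].
move=> c _.
by rewrite inE /blowup_arc /= uw uX.
Qed.

Lemma blowup_cut (X : {set blowup_vertex}) x y :
  x \in X -> y \notin X -> n <= #|leaving X|.
Proof.
move=> xX yX; rewrite leqNgt; apply/negP => few.
have live v c : (v, Some c) \in X -> exists2 w, tree_arc v w & (w, None) \in X.
  move=> vcX; apply/exists_inP; apply: contraLR few => /exists_inPn dead.
  by rewrite -leqNgt (leaving_dead_copy vcX dead).
have full v c : (v, None) \in X -> (v, Some c) \in X.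
  by move=> vX; apply: contraLR few => vcX; rewrite -leqNgt (leaving_main_copy vX vcX).
have [u0 u0X] : exists u0, (u0, None) \in X.
  by case: x xX => v [c /live[w _ wX]|vX]; [exists w | exists v].
have [w0 w0X] : exists w0, (w0, None) \notin X.
  case: y yX => v [c vcX|vX]; last by exists v.
  by exists v; apply: contra vcX; apply: full.
have [u [w [uw uX wX]]] :=
  connect_exit (Q := fun v => (v, None) \in X) (tree_connect n_gt0 u0 w0) u0X w0X.
by move: few; rewrite ltnNge (leaving_all_copies uw (full u ^~ uX) wX).
Qed.

Lemma blowup_k_arc_connected k : k <= n -> strongly_k_arc_connected blowup_arc k.
Proof.
move=> le_k_n; apply: cut_strongly_k_arc_connected => X x y xX yX.
exact: leq_trans le_k_n (blowup_cut xX yX).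
Qed.

Lemma blowup_arc_move x y :
  blowup_arc x y -> x.1 != y.1 -> [/\ x.2 != None, y.2 = None & tree_arc x.1 y.1].
Proof.
case: x y => v [c|] [w [c'|]]; rewrite /blowup_arc /=.
- by case/andP=> /eqP->; rewrite eqxx.
- by [].
- by move/eqP->; rewrite eqxx.
- by [].
Qed.

Definition in_copy (a : node) (z : blowup_vertex) := (z.1 == a) && (z.2 != None).

Definition copy_depth (z : blowup_vertex) : seq 'I_n :=
  if z.2 is Some c then val c else [::].

Lemma blowup_arc_into_copy x a c :
  blowup_arc x (a, Some c) -> ~~ in_copy a x -> x = (a, None).
Proof.
case: x => v [c'|]; rewrite /blowup_arc /in_copy /= ?andbT ?andbF.
- by case/andP=> ->.
- by move/eqP->.
Qed.

Lemma enter_copy_through_main a x p :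
  path blowup_arc x p -> ~~ in_copy a x -> in_copy a (last x p) ->
  (a, None) \in x :: p.
Proof.
move=> xp nx lx; have [p1 [w [p2 [-> nu aw uw]]]] := path_first_entry xp nx lx.
case: w aw uw => a' [c|]; rewrite /in_copy /= ?andbT ?andbF // => /eqP-> uw.
by rewrite -(blowup_arc_into_copy uw nu) -cat_cons mem_cat mem_last.
Qed.

Lemma enter_subtree_through_parent (r : node) x p :
  path blowup_arc x p -> x.2 = None -> ~~ suffix r x.1 -> suffix r (last x p).1 ->
  (tree_parent r, None) \in x :: p.
Proof.
move=> xp x_main nrx rl.
have [p1 [w [p2 [E nru rw uw]]]] :=
  path_first_entry (Q := fun z : blowup_vertex => suffix r z.1) xp nrx rl.
have moves : (last x p1).1 != w.1 by apply: contraNneq nru => ->.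
have [copy_u _ uw'] := blowup_arc_move uw moves.
have [_ uE] := tree_arc_enter_subtree uw' rw nru.
have -> : tree_parent r = (last x p1).1 by apply: val_inj; rewrite /= tree_parentE uE.
rewrite E -cat_cons mem_cat; apply/orP; left; apply: enter_copy_through_main.
- by move: xp; rewrite E cat_path => /andP[].
- by rewrite /in_copy x_main andbF.
- by rewrite /in_copy eqxx copy_u.
Qed.

Definition below_copy (a r : node) (z : blowup_vertex) :=
  in_copy a z && suffix r (copy_depth z).

(* Inside the copy of a the arcs go from children to parents, so the only arc
   from the subtree below r to the rest of the copy ends at the parent of r. *)
Lemma exit_below_copy a r x p :
  path blowup_arc x p -> below_copy a r x -> in_copy a (last x p) ->
  ~~ below_copy a r (last x p) ->
  exists2 y, y \in p &
    ~~ below_copy a r y && (y \in [:: (a, None); (a, Some (tree_parent r))]).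
Proof.
move=> xp bx copy_l nbl.
have nbx : ~~ predC (below_copy a r) x by rewrite /= bx.
have [p1 [w [p2 [E bu nbw uw]]]] := path_first_entry xp nbx nbl.
have wp2 : path blowup_arc w p2 by move: xp; rewrite E cat_path /= => /and3P[].
have lastE : last w p2 = last x p by rewrite E last_cat.
have wp y : y \in w :: p2 -> y \in p by rewrite E mem_cat => ->; rewrite orbT.
move: bu nbw uw; rewrite /= negbK.
case: (last x p1) => a1 [c|];
  rewrite /below_copy /in_copy /copy_depth /= ?andbF // andbT.
case/andP=> /eqP-> rc; case: w E lastE wp2 wp => a' [c'|] E lastE wp2 wp;
  rewrite /blowup_arc /= ?andbT.
- move=> nrc' /andP[/eqP aa' c'c]; subst a'; rewrite eqxx /= in nrc'.
  have [_ c'E] := tree_arc_enter_subtree c'c rc nrc'.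
  have c'_parent : c' = tree_parent r by apply: val_inj; rewrite /= tree_parentE.
  exists (a, Some c'); first by apply: wp; rewrite mem_head.
  by rewrite eqxx /= nrc' c'_parent !inE eqxx orbT.
- move=> _ _; exists (a, None); last by rewrite andbF /= inE eqxx.
  apply: wp; apply: enter_copy_through_main wp2 _ _; first by rewrite /in_copy andbF.
  by rewrite lastE.
Qed.

End Blowup.

Lemma three_others (m : 'I_4) : exists j1 j2 j3 : 'I_4,
  [/\ j1 != m, j2 != m & j3 != m] /\ [/\ j1 != j2, j1 != j3 & j2 != j3].
Proof.
case: m => -[|[|[|[|//]]]] m_lt.
- by exists (@Ordinal 4 1 isT), (@Ordinal 4 2 isT), (@Ordinal 4 3 isT).
- by exists (@Ordinal 4 0 isT), (@Ordinal 4 2 isT), (@Ordinal 4 3 isT).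
- by exists (@Ordinal 4 0 isT), (@Ordinal 4 1 isT), (@Ordinal 4 3 isT).
- by exists (@Ordinal 4 0 isT), (@Ordinal 4 1 isT), (@Ordinal 4 2 isT).
Qed.

Lemma others_not_covered (m : 'I_4) (p q : 'I_4 -> Prop) :
  (forall j1 j2, j1 != m -> j2 != m -> p j1 -> p j2 -> j1 = j2) ->
  (forall j1 j2, j1 != m -> j2 != m -> q j1 -> q j2 -> j1 = j2) ->
  ~ (forall j, j != m -> p j \/ q j).
Proof.
move=> p_uniq q_uniq cover.
have [j1 [j2 [j3 [[j1m j2m j3m] [j12 j13 j23]]]]] := three_others m.
have clash ja jb :
    ja != jb -> ja != m -> jb != m -> p ja /\ p jb \/ q ja /\ q jb -> False.
  move=> /eqP ab am bm [[pa pb]|[qa qb]]; apply: ab; [exact: p_uniq | exact: q_uniq].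
case: (cover j1 j1m) (cover j2 j2m) (cover j3 j3m) => [p1|q1] [p2|q2] [p3|q3];
  first [ by apply: (clash j1 j2) => //; tauto
        | by apply: (clash j1 j3) => //; tauto
        | by apply: (clash j2 j3) => //; tauto ].
Qed.

Section BiK4Subdivision.
Variables (V : finType) (b : 'I_4 -> V) (P : 'I_4 -> 'I_4 -> seq V).
Hypothesis b_inj : injective b.
Hypothesis branch_notin_P : forall i j l, i != j -> b l \notin P i j.
Hypothesis P_disjoint :
  forall i j i' j', i != j -> i' != j' -> (i, j) != (i', j') ->
  forall v, v \in P i j -> v \notin P i' j'.

Definition branch_path i j := b i :: rcons (P i j) (b j).

Lemma mem_branch_path_branch i j l :
  i != j -> (b l \in branch_path i j) = (l == i) || (l == j).
Proof.
move=> ij; rewrite inE mem_rcons inE (negbTE (branch_notin_P l ij)) orbF.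
by rewrite !(inj_eq b_inj) orbC.
Qed.

Lemma branch_paths_meet i j i' j' z :
  i != j -> i' != j' -> (forall l, z != b l) ->
  z \in branch_path i j -> z \in branch_path i' j' -> (i, j) = (i', j').
Proof.
move=> ij ij' zb; rewrite !(inE, mem_rcons) !(negbTE (zb _)) /= => zP zP'.
by apply/eqP; apply: contraLR zP' => /P_disjoint; apply.
Qed.

Definition link_vertex m j z :=
  z != b m /\ (z \in branch_path j m \/ z \in branch_path m j).

Lemma link_vertex_unique m j1 j2 z : j1 != m -> j2 != m ->
  link_vertex m j1 z -> link_vertex m j2 z -> j1 = j2.
Proof.
move=> j1m j2m [zm z1] [_ z2].
have [[l zl]|zb] : (exists l, z = b l) \/ (forall l, z != b l).
  case: (pickP (fun l => z == b l)) => [l /eqP|zb]; first by left; exists l.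
  by right=> l; rewrite zb.
- have lm : l != m by apply: contraNneq zm => lm; rewrite zl lm.
  have end_l j : j != m -> z \in branch_path j m \/ z \in branch_path m j -> l = j.
    move=> jm; have mj : m != j by rewrite eq_sym.
    by rewrite zl !mem_branch_path_branch // (negbTE lm) orbF /=; case=> /eqP.
  by rewrite -(end_l j1 j1m z1) -(end_l j2 j2m z2).
- have mj1 : m != j1 by rewrite eq_sym.
  have mj2 : m != j2 by rewrite eq_sym.
  case: z1 z2 => z1 [] z2.
  + by case: (branch_paths_meet j1m j2m zb z1 z2).
  + by case: (branch_paths_meet j1m mj2 zb z1 z2) => e; rewrite e eqxx in j1m.
  + by case: (branch_paths_meet mj1 j2m zb z1 z2) => _ e; rewrite e eqxx in j1m.
  + by case: (branch_paths_meet mj1 mj2 zb z1 z2).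
Qed.

Lemma two_vertices_miss_a_link m z y :
  ~ (forall j, j != m -> link_vertex m j z \/ link_vertex m j y).
Proof.
by apply: others_not_covered => j1 j2 j1m j2m; apply: link_vertex_unique.
Qed.

End BiK4Subdivision.

Section BlowupNoSubdivision.
Variable n : nat.
Local Notation vertex := (blowup_vertex n).
Variables (b : 'I_4 -> vertex) (P : 'I_4 -> 'I_4 -> seq vertex).
Hypothesis b_inj : injective b.
Hypothesis P_path :
  forall i j, i != j -> path (@blowup_arc n) (b i) (rcons (P i j) (b j)).
Hypothesis branch_notin_P : forall i j l, i != j -> b l \notin P i j.
Hypothesis P_disjoint :
  forall i j i' j', i != j -> i' != j' -> (i, j) != (i', j') ->
  forall v, v \in P i j -> v \notin P i' j'.

Local Notation link_vertex := (link_vertex b P).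

Lemma branch_not_in_copy i : (b i).2 = None.
Proof.
case Ei: (b i).2 => [c0|] //; exfalso; set v := (b i).1.
have copy_i : in_copy v (b i) by rewrite /in_copy Ei eqxx.
have [m copy_m maxm] :=
  suffix_maximal (D := fun j => in_copy v (b j)) (fun j => copy_depth (b j)) copy_i.
have [cm bmE] : exists cm, b m = (v, Some cm).
  move: copy_m; rewrite /in_copy.
  by case: (b m) => a [cm|] /andP[/= /eqP-> //] _; exists cm.
rewrite bmE /= in maxm.
have below_m : below_copy v cm (b m).
  by rewrite /below_copy bmE /in_copy /= eqxx suffix_refl.
have not_below j : j != m -> ~~ below_copy v cm (b j).
  move=> jm; apply: contra jm => /andP[copy_j /(maxm j copy_j) eq_j].
  apply/eqP/b_inj; rewrite bmE; move: copy_j eq_j.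
  by rewrite /in_copy; case: (b j) => a [c|] /andP[/= /eqP-> _] //= /val_inj->.
apply: (two_vertices_miss_a_link b_inj branch_notin_P P_disjoint (m := m)
          (z := (v, None)) (y := (v, Some (tree_parent cm)))) => j jm.
have [copy_j|main_j] := boolP (in_copy v (b j)); last first.
  left; split; first by rewrite bmE xpair_eqE andbF.
  left; apply: enter_copy_through_main (P_path jm) main_j _.
  by rewrite last_rcons bmE /in_copy eqxx.
have mj : m != j by rewrite eq_sym.
have copy_l : in_copy v (last (b m) (rcons (P m j) (b j))) by rewrite last_rcons.
have not_below_l : ~~ below_copy v cm (last (b m) (rcons (P m j) (b j))).
  by rewrite last_rcons not_below.
have [y yP /andP[not_below_y y_gate]] :=
  exit_below_copy (P_path mj) below_m copy_l not_below_l.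
have link_y : link_vertex m j y.
  split; first by apply: contraNneq not_below_y => ->.
  by right; rewrite /branch_path inE yP orbT.
by move: y_gate; rewrite !inE => /orP[] /eqP y_eq; [left | right]; rewrite -y_eq.
Qed.

Lemma not_all_branches_main : ~ (forall i, (b i).2 = None).
Proof.
move=> main.
have [m _ maxm] := suffix_maximal (fun i => val (b i).1) (isT : predT ord0).
set vm := (b m).1.
have bmE : b m = (vm, None) by rewrite [b m]surjective_pairing main.
have not_below j : j != m -> ~~ suffix vm (b j).1.
  move=> jm; apply: contra jm => /(maxm j isT) /val_inj eq_j.
  by apply/eqP/b_inj; rewrite bmE [b j]surjective_pairing main eq_j.
have size_vm : 0 < size vm.
  have [j1 [_ [_ [[j1m _ _] _]]]] := three_others m.
  rewrite lt0n size_eq0; apply: contra (not_below j1 j1m) => /eqP->.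
  exact: suffix0s.
apply: (two_vertices_miss_a_link b_inj branch_notin_P P_disjoint (m := m)
          (z := (tree_parent vm, None)) (y := (tree_parent vm, None))) => j jm.
left; split.
  rewrite bmE; apply/eqP => -[/(congr1 val)/(congr1 size)].
  by rewrite /= tree_parentE size_behead; lia.
left; apply: enter_subtree_through_parent (P_path jm) (main j) (not_below j jm) _.
by rewrite last_rcons suffix_refl.
Qed.

End BlowupNoSubdivision.

Lemma blowup_no_subdiv n : ~ has_subdiv_biK4 (@blowup_arc n).
Proof.
move=> [b [P [b_inj [P_sub P_disjoint]]]].
have P_path i j : i != j -> path (@blowup_arc n) (b i) (rcons (P i j) (b j)).
  by case/P_sub.
have branch_notin_P i j l : i != j -> b l \notin P i j.
  by case/P_sub=> _ _ P_branch; apply/negP => /P_branch/(_ l); rewrite eqxx.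
apply: (not_all_branches_main b_inj P_path branch_notin_P P_disjoint).
exact: branch_not_in_copy b_inj P_path branch_notin_P P_disjoint.
Qed.

Theorem proposition1p10 :
  forall k : nat,
    exists (V : finType) (A : rel V),
      [/\ 1 < #|V|, loopless A, strongly_k_arc_connected A k
        & ~ has_subdiv_biK4 A].
Proof.
move=> k; exists (blowup_vertex k.+1), (@blowup_arc k.+1); split.
- apply/card_gt1P; pose r := tree_root k.+1.
  by exists (r, None), (r, Some r); split=> //; apply/eqP => -[].
- exact: blowup_arc_irr.
- exact: blowup_k_arc_connected.
- exact: blowup_no_subdiv.
Qed.
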